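(* Let $\beta>0$ and $0<k<\frac{3}{3+\beta}$. Let \[f_{+-}(x,y,z)=\beta(x^2y^2+y^2z^2+x^2z^2)+\Big(x^2+y^2+z^2-\tfrac12\Big)^2-\tfrac{1-k}{4}.\] Then the zero set $Q^{+-}(k)=\{(x,y,z)\in\mathbb{R}^3: f_{+-}(x,y,z)=0\}$ is the disjoint union of two embedded compact connected components, each invariant under the octahedral group $O_h$ and each homeomorphic to a sphere.
   Context: $O_h$ denotes the octahedral group of order 48, i.e. the group of all $3\times 3$ signed permutation matrices acting on $\mathbb{R}^3$; $f_{+-}$ is $O_h$-invariant. *)

From HB Require Import structures.
From mathcomp Require Import all_boot all_order all_algebra all_fingroup.
From mathcomp Require Import all_classical all_reals all_analysis.
Set Implicit Arguments. Unset Strict Implicit. Unset Printing Implicit Defensive.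
Import Order.TTheory GRing.Theory Num.Theory.
Import numFieldNormedType.Exports.
Local Open Scope classical_set_scope.
Local Open Scope ring_scope.

Section Defs.
Variable R : realType.

Definition cx (p : 'rV[R]_3) : R := p ord0 0.
Definition cy (p : 'rV[R]_3) : R := p ord0 1.
Definition cz (p : 'rV[R]_3) : R := p ord0 2.

Definition fpm (beta k : R) (p : 'rV[R]_3) : R :=
  let x := cx p in let y := cy p in let z := cz p in
  beta * (x^+2 * y^+2 + y^+2 * z^+2 + x^+2 * z^+2)
  + (x^+2 + y^+2 + z^+2 - 2^-1) ^+ 2 - (1 - k) / 4.

Definition Qpm (beta k : R) : set 'rV[R]_3 := [set p | fpm beta k p = 0].

Definition sphere2 : set 'rV[R]_3 :=
  [set p | cx p ^+ 2 + cy p ^+ 2 + cz p ^+ 2 = 1].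

(* O_h: the 3x3 signed permutation matrices *)
Definition signed_perm_mx (M : 'M[R]_3) : Prop :=
  exists (s : 'S_3) (e : 'I_3 -> R),
    (forall i, e i = 1 \/ e i = -1) /\
    M = \matrix_(i, j) (if s i == j then e i else 0).

Definition Oh_invariant (A : set 'rV[R]_3) : Prop :=
  forall M, signed_perm_mx M -> forall p, A p -> A (p *m M).

End Defs.

Definition homeomorphic (T U : topologicalType) (A : set T) (B : set U) : Prop :=
  exists (f : T -> U) (g : U -> T),
    set_fun A B f /\ set_fun B A g /\
    {in A, cancel f g} /\ {in B, cancel g f} /\
    {within A, continuous f} /\ {within B, continuous g}.

From HB Require Import structures.
From mathcomp Require Import all_boot all_order all_algebra all_fingroup.
From mathcomp Require Import all_classical all_reals all_analysis.
From mathcomp Require Import ring lra.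
Set Implicit Arguments.
Unset Strict Implicit.
Unset Printing Implicit Defensive.
Import Order.TTheory GRing.Theory Num.Theory.
Import numFieldNormedType.Exports.
Local Open Scope classical_set_scope.
Local Open Scope ring_scope.

(* Write [N = |p|^2], [S = x^2 y^2 + y^2 z^2 + x^2 z^2], so that
   [f = N^2 + beta S - N + k/4].  Along the ray through a unit vector [u],
   [f (sqrt t u) = a t^2 - t + k/4] with [a = 1 + beta S(u)], and the bound
   [3 S <= N^2] makes the discriminant [1 - k a] positive: every ray meets the
   zero set exactly twice, at radii depending continuously on [u].  The two
   choices of root give two radial graphs over the sphere, separated by the sign
   of the radial derivative, which never vanishes on the zero set. *)

Section PointwiseContinuity.
Variables (R : realType) (T : topologicalType).
Implicit Types f g : T -> R.

(* Pointwise forms of [continuousD] etc., stated on lambda terms so that they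
   apply to goals of the shape [{for x, continuous (fun y => ...)}]. *)
Lemma cont_add (V : normedModType R) (f g : T -> V) x :
  {for x, continuous f} -> {for x, continuous g} -> {for x, continuous (fun y => f y + g y)}.
Proof. exact: continuousD. Qed.

Lemma cont_mul f g x : {for x, continuous f} -> {for x, continuous g} ->
  {for x, continuous (fun y => f y * g y)}.
Proof. exact: continuousM. Qed.

Lemma cont_opp f x : {for x, continuous f} -> {for x, continuous (fun y => - f y)}.
Proof. exact: continuousN. Qed.

Lemma cont_cst (V : normedModType R) (c : V) x : {for x, continuous (fun _ : T => c)}.
Proof. exact: cst_continuous. Qed.

Lemma cont_sqr f x : {for x, continuous f} -> {for x, continuous (fun y => f y ^+ 2)}.
Proof. by move=> fx; apply: cont_mul. Qed.

Lemma cont_inv f x : f x != 0 -> {for x, continuous f} ->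
  {for x, continuous (fun y => (f y)^-1)}.
Proof. exact: continuousV. Qed.

Lemma cont_sqrt f x : {for x, continuous f} -> {for x, continuous (fun y => Num.sqrt (f y))}.
Proof. by move=> fx; apply: continuous_comp fx _; exact: sqrt_continuous. Qed.

End PointwiseContinuity.

Section CoordinateContinuity.
Variable R : realType.

Lemma cx_continuous : continuous (@cx R).
Proof. by move=> p; exact: (@coord_continuous R 1 3 ord0 0). Qed.
Lemma cy_continuous : continuous (@cy R).
Proof. by move=> p; exact: (@coord_continuous R 1 3 ord0 1). Qed.
Lemma cz_continuous : continuous (@cz R).
Proof. by move=> p; exact: (@coord_continuous R 1 3 ord0 2). Qed.

End CoordinateContinuity.

Ltac poly_continuity :=
  repeat match goal with
  | |- {for _, continuous _} => rewrite /prop_for /=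
  | |- continuous_at _ (fun _ => ?c) => apply: (@cont_cst _ 'rV[_]_3)
  | |- continuous_at _ (fun _ => _ + _) => apply: (@cont_add _ 'rV[_]_3)
  | |- continuous_at _ (fun _ => _ * _) => apply: (@cont_mul _ 'rV[_]_3)
  | |- continuous_at _ (fun _ => - _) => apply: (@cont_opp _ 'rV[_]_3)
  | |- continuous_at _ (fun _ => _ ^+ 2) => apply: (@cont_sqr _ 'rV[_]_3)
  | |- continuous_at _ (@cx _) => apply: cx_continuous
  | |- continuous_at _ (@cy _) => apply: cy_continuous
  | |- continuous_at _ (@cz _) => apply: cz_continuous
  end.

Section Coordinates.
Variable R : realType.
Implicit Types p q : 'rV[R]_3.

Definition sqnorm p : R := cx p ^+ 2 + cy p ^+ 2 + cz p ^+ 2.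
Definition sqprod p : R :=
  cx p ^+ 2 * cy p ^+ 2 + cy p ^+ 2 * cz p ^+ 2 + cx p ^+ 2 * cz p ^+ 2.

Lemma rv3P p q : cx p = cx q -> cy p = cy q -> cz p = cz q -> p = q.
Proof.
move=> ex ey ez; apply/rowP => -[[|[|[|i]]] Hi] //.
- by rewrite (_ : Ordinal Hi = 0) //; apply/val_inj.
- by rewrite (_ : Ordinal Hi = 1) //; apply/val_inj.
- by rewrite (_ : Ordinal Hi = 2) //; apply/val_inj.
Qed.

Lemma cxD p q : cx (p + q) = cx p + cx q. Proof. by rewrite /cx mxE. Qed.
Lemma cyD p q : cy (p + q) = cy p + cy q. Proof. by rewrite /cy mxE. Qed.
Lemma czD p q : cz (p + q) = cz p + cz q. Proof. by rewrite /cz mxE. Qed.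
Lemma cxN p : cx (- p) = - cx p. Proof. by rewrite /cx mxE. Qed.
Lemma cyN p : cy (- p) = - cy p. Proof. by rewrite /cy mxE. Qed.
Lemma czN p : cz (- p) = - cz p. Proof. by rewrite /cz mxE. Qed.
Lemma cxZ c p : cx (c *: p) = c * cx p. Proof. by rewrite /cx mxE. Qed.
Lemma cyZ c p : cy (c *: p) = c * cy p. Proof. by rewrite /cy mxE. Qed.
Lemma czZ c p : cz (c *: p) = c * cz p. Proof. by rewrite /cz mxE. Qed.

Lemma sqnormZ c p : sqnorm (c *: p) = c ^+ 2 * sqnorm p.
Proof. by rewrite /sqnorm cxZ cyZ czZ; ring. Qed.

Lemma sqprodZ c p : sqprod (c *: p) = c ^+ 4 * sqprod p.
Proof. by rewrite /sqprod cxZ cyZ czZ; ring. Qed.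

Lemma sqnorm_ge0 p : 0 <= sqnorm p.
Proof. rewrite /sqnorm; nra. Qed.

Lemma sqprod_ge0 p : 0 <= sqprod p.
Proof. rewrite /sqprod; nra. Qed.

Lemma sqprod_le p : 3 * sqprod p <= sqnorm p ^+ 2.
Proof.
rewrite /sqprod /sqnorm.
have := sqr_ge0 (cx p ^+ 2 - cy p ^+ 2); have := sqr_ge0 (cy p ^+ 2 - cz p ^+ 2).
have := sqr_ge0 (cx p ^+ 2 - cz p ^+ 2); nra.
Qed.

Lemma sum3E (F : 'I_3 -> R) : \sum_i F i = F 0 + F 1 + F 2.
Proof.
rewrite !big_ord_recl big_ord0 addr0 addrA; congr (_ + _ + _); exact/congr1/val_inj.
Qed.

Lemma sqnorm_sum p : sqnorm p = \sum_i p ord0 i ^+ 2.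
Proof. by rewrite sum3E. Qed.

Lemma sqprod_sum p : 2 * sqprod p = sqnorm p ^+ 2 - \sum_i p ord0 i ^+ 4.
Proof. rewrite sum3E /sqprod /sqnorm /cx /cy /cz; ring. Qed.

Lemma coord_sqr_le_sqnorm p (i : 'I_3) : p ord0 i ^+ 2 <= sqnorm p.
Proof. by rewrite sqnorm_sum (bigD1 i) //= lerDl sumr_ge0 // => j _; exact: sqr_ge0. Qed.

Lemma sqnorm_continuous : continuous (sqnorm : 'rV[R]_3 -> R).
Proof. by move=> p; rewrite /sqnorm; poly_continuity. Qed.

Lemma sqprod_continuous : continuous (sqprod : 'rV[R]_3 -> R).
Proof. by move=> p; rewrite /sqprod; poly_continuity. Qed.

Lemma fpm_continuous (beta k : R) : continuous (fpm beta k).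
Proof. by move=> p; rewrite /fpm; poly_continuity. Qed.

Lemma signed_perm_mxE (s : 'S_3) (e : 'I_3 -> R) p j :
  (p *m \matrix_(i, j) (if s i == j then e i else 0)) ord0 j
  = e (s^-1 j)%g * p ord0 (s^-1 j)%g.
Proof.
rewrite !mxE (bigD1 (s^-1 j)%g) //= big1 ?addr0; first by rewrite mxE permKV eqxx mulrC.
move=> i ni; rewrite mxE; case: eqP => [sij|]; last by rewrite mulr0.
by move: ni; rewrite -sij permK eqxx.
Qed.

Lemma signed_perm_sum_even M p n : signed_perm_mx M ->
  \sum_j (p *m M) ord0 j ^+ (2 * n) = \sum_j p ord0 j ^+ (2 * n).
Proof.
move=> [s [e [he ->]]]; rewrite (reindex_inj (@perm_inj _ s)) /=.
apply: eq_bigr => j _; rewrite signed_perm_mxE permK exprMn !exprM.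
by have [->|->] := he j; rewrite ?sqrrN expr1n expr1n mul1r.
Qed.

Lemma sqnorm_signed_perm M p : signed_perm_mx M -> sqnorm (p *m M) = sqnorm p.
Proof. by move=> hM; rewrite !sqnorm_sum; have := signed_perm_sum_even p 1 hM. Qed.

Lemma sqprod_signed_perm M p : signed_perm_mx M -> sqprod (p *m M) = sqprod p.
Proof.
move=> hM; apply: (@mulfI _ 2); first by rewrite pnatr_eq0.
rewrite !sqprod_sum sqnorm_signed_perm //.
by have := signed_perm_sum_even p 2 hM; rewrite mulnn => ->.
Qed.

End Coordinates.

Section SphereConnected.
Variable R : realType.
Implicit Types (p q : 'rV[R]_3) (b : bool).

Definition e3 : 'rV[R]_3 := delta_mx 0 2.

Lemma e3E : [/\ cx e3 = 0, cy e3 = 0 & cz e3 = 1].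
Proof. by rewrite /cx /cy /cz /e3 !mxE. Qed.

Definition hemisphere b := [set u | @sphere2 R u /\ 0 <= (-1) ^+ b * cz u].

(* For [t] from 0 to 1 this runs inside the hemisphere from its pole to [q],
   scaling the horizontal part of [q] by [t]. *)
Definition pole_path b q (t : R) : 'rV[R]_3 :=
  t *: (q - cz q *: e3) + ((-1) ^+ b * Num.sqrt (1 - t ^+ 2 * (cx q ^+ 2 + cy q ^+ 2))) *: e3.

Lemma pole_pathE b q t :
  [/\ cx (pole_path b q t) = t * cx q, cy (pole_path b q t) = t * cy q &
      cz (pole_path b q t) = (-1) ^+ b * Num.sqrt (1 - t ^+ 2 * (cx q ^+ 2 + cy q ^+ 2))].
Proof.
have [x3 y3 z3] := e3E; rewrite /pole_path.
rewrite !(cxD, cyD, czD, cxZ, cyZ, czZ, cxN, cyN, czN) x3 y3 z3; split; ring.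
Qed.

Lemma pole_path_in b q t : hemisphere b q -> 0 <= t <= 1 -> hemisphere b (pole_path b q t).
Proof.
move=> [sq zq] /andP[t0 t1]; rewrite /hemisphere /sphere2 /=.
have [-> -> ->] := pole_pathE b q t.
have sq' : cx q ^+ 2 + cy q ^+ 2 + cz q ^+ 2 = 1 := sq.
have r0 : 0 <= 1 - t ^+ 2 * (cx q ^+ 2 + cy q ^+ 2).
  have : t ^+ 2 <= 1 by rewrite expr_le1.
  have := sqr_ge0 (cz q); have := sqr_ge0 (cx q); have := sqr_ge0 (cy q); nra.
split; last by rewrite mulrA -expr2 sqrr_sign mul1r sqrtr_ge0.
by rewrite !exprMn sqr_sqrtr // sqrr_sign; ring.
Qed.

Lemma pole_path1 b q : hemisphere b q -> pole_path b q 1 = q.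
Proof.
move=> [sq zq]; have [px py pz] := pole_pathE b q 1.
have sq' : cx q ^+ 2 + cy q ^+ 2 + cz q ^+ 2 = 1 := sq.
apply: rv3P; rewrite ?px ?py ?mul1r //.
rewrite pz expr1n mul1r (_ : 1 - _ = cz q ^+ 2); last by rewrite -sq'; ring.
rewrite sqrtr_sqr; move: zq; case: (b) => /=.
  by rewrite expr1 mulN1r oppr_ge0 => zq; rewrite ler0_norm // mulN1r opprK.
by rewrite expr0 !mul1r => zq; rewrite ger0_norm.
Qed.

Lemma pole_path0 b q : pole_path b q 0 = (-1) ^+ b *: e3.
Proof. by rewrite /pole_path scale0r add0r expr0n /= mul0r subr0 sqrtr1 mulr1. Qed.

Lemma pole_path_continuous b q : continuous (pole_path b q).
Proof.
move=> t; rewrite /pole_path; apply: (@cont_add R R).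
  by apply: continuousZ; [exact: cvg_id | exact: cont_cst].
apply: continuousZ; last exact: cont_cst.
apply: (@cont_mul R R); first exact: cont_cst.
apply: cont_sqrt; apply: cont_add; first exact: cont_cst.
by apply: cont_opp; apply: cont_mul; [apply: cont_sqr|exact: cont_cst].
Qed.

Lemma hemisphere_connected b : connected (hemisphere b).
Proof.
have -> : hemisphere b = \bigcup_(q in hemisphere b) (pole_path b q @` `[0, 1]).
  apply/seteqP; split => [q Hq|u [q Hq [t tI <-]]].
    by exists q => //; exists 1; rewrite ?pole_path1 //= in_itv /= lexx ler01.
  by apply: pole_path_in => //; move: tI; rewrite /= in_itv.
apply: bigcup_connected.
  exists ((-1) ^+ b *: e3) => q Hq; exists 0; last exact: pole_path0.
  by rewrite /= in_itv /= lexx ler01.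
move=> q Hq; apply: connected_continuous_connected; first exact: segment_connected.
exact/continuous_subspaceT/pole_path_continuous.
Qed.

Definition e1 : 'rV[R]_3 := delta_mx 0 0.

Lemma e1_sphere : @sphere2 R e1.
Proof. by rewrite /sphere2 /= /cx /cy /cz /e1 !mxE /= expr1n expr0n /= !addr0. Qed.

Lemma sphere2_connected : connected (@sphere2 R).
Proof.
have -> : @sphere2 R = hemisphere false `|` hemisphere true.
  apply/seteqP; split => [u su|u [[]|[]]] //.
  have [z0|z0] := lerP 0 (cz u); [left|right]; split => //=; rewrite ?expr0 ?mul1r //.
  by rewrite expr1 mulN1r oppr_ge0 ltW.
apply: connectedU; [|exact: hemisphere_connected..].
exists e1; have ez : cz e1 = 0 by rewrite /cz /e1 mxE.
by split; split; rewrite ?ez ?mulr0 //; exact: e1_sphere.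
Qed.

End SphereConnected.

Section ZeroSet.
Variables (R : realType) (beta k : R).
Hypotheses (beta_gt0 : 0 < beta) (k_gt0 : 0 < k) (k_small : k * (3 + beta) < 3).
Implicit Types (p u : 'rV[R]_3) (b : bool).

Local Ltac lra_hyps := move: beta_gt0 k_gt0 k_small => *; lra.
Local Ltac nra_hyps := move: beta_gt0 k_gt0 k_small => *; nra.

Definition quartic p := sqnorm p ^+ 2 + beta * sqprod p.

Definition radial p := 2 * quartic p - sqnorm p.

Lemma fpm_quartic p : fpm beta k p = quartic p - sqnorm p + k / 4.
Proof. by rewrite /fpm /quartic -/(sqnorm p) -/(sqprod p); field. Qed.

Definition ray_poly p : {poly R} :=
  (quartic p)%:P * ('X + 1) ^+ 4 - (sqnorm p)%:P * ('X + 1) ^+ 2 + (k / 4)%:P.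

Lemma fpm_ray p t : fpm beta k (t *: p + p) = (ray_poly p).[t].
Proof.
rewrite -[X in _ + X]scale1r -scalerDl fpm_quartic /ray_poly.
rewrite !(hornerD, hornerN, hornerCM, horner_exp, hornerX, hornerC) /quartic.
by rewrite sqnormZ sqprodZ; ring.
Qed.

Lemma derive_fpm_radial p : 'D_p (fpm beta k) p = 2 * radial p.
Proof.
have -> : 'D_p (fpm beta k) p = 'D_1 (horner (ray_poly p)) 0.
  have ray : (fun h : R => h^-1 *: ((fpm beta k \o shift p) (h *: p) - fpm beta k p)) =
      (fun h : R => h^-1 *: ((horner (ray_poly p) \o shift 0) (h *: 1) - (ray_poly p).[0])).
    apply/funext => h /=.
    by rewrite fpm_ray -(fpm_ray p 0) scale0r add0r /GRing.scale /= mulr1 addr0.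
  by rewrite /derive ray.
rewrite (derive_val (is_derive := is_derive_poly (ray_poly p) 0)) /ray_poly.
rewrite !(derivD, derivB, derivN, deriv_mulC, derivC, deriv_exp, derivX) !addr0.
rewrite !(hornerD, hornerN, hornerCM, hornerMn, hornerM, horner_exp, hornerX, hornerC).
by rewrite /radial; ring.
Qed.

(* [radial p = 0] would force [sqnorm p = k/2] and [quartic p = k/4], while
   [3 sqprod <= sqnorm^2] bounds [quartic] by [(k/2)^2 (1 + beta/3) < k/4]. *)
Lemma zero_set_numbers (N S : R) : 0 <= S -> 0 <= N -> 3 * S <= N ^+ 2 ->
  N ^+ 2 + beta * S - N + k / 4 = 0 ->
  [/\ 0 < N, N <= 1 & 2 * (N ^+ 2 + beta * S) - N != 0].
Proof.
move=> S0 N0 SN E; have bS := mulr_ge0 (ltW beta_gt0) S0.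
have N_gt0 : 0 < N.
  rewrite lt_neqAle N0 andbT; apply/eqP => N0'.
  by move: E; rewrite -N0' expr0n /=; lra_hyps.
split => //; first by nra_hyps.
apply/eqP => radial0; have EN : N = k / 2 by nra_hyps.
rewrite EN in E SN radial0.
have : beta * S <= beta * ((k / 2) ^+ 2 / 3) by rewrite ler_pM2l //; lra_hyps.
by nra_hyps.
Qed.

Lemma Qpm_facts p : Qpm beta k p -> [/\ 0 < sqnorm p, sqnorm p <= 1 & radial p != 0].
Proof.
rewrite /Qpm /= fpm_quartic /radial /quartic.
exact: zero_set_numbers (sqprod_ge0 p) (sqnorm_ge0 p) (sqprod_le p).
Qed.

Lemma signed_radial_neq0 b p : Qpm beta k p -> (-1) ^+ b * radial p != 0.
Proof. by move=> /Qpm_facts[_ _ r0]; rewrite mulf_neq0 ?signr_eq0. Qed.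

Definition branch b := [set p | Qpm beta k p /\ 0 < (-1) ^+ b * radial p].

Lemma Qpm_branches : Qpm beta k = branch false `|` branch true.
Proof.
apply/seteqP; split => [p Qp|p [[]|[]]] //; have [_ _ r0] := Qpm_facts Qp.
have [r_gt0|r_le0] := ltrP 0 (radial p); [left|right]; split => //=.
  by rewrite mul1r.
by rewrite mulN1r oppr_gt0 lt_neqAle r0.
Qed.

Lemma branches_disjoint : branch false `&` branch true = set0.
Proof.
apply/seteqP; split => // p [[_ /= r_gt0] [_ /=]].
by rewrite mulN1r oppr_gt0 mul1r in r_gt0 * => /(lt_trans r_gt0); rewrite ltxx.
Qed.

Lemma branchE b : branch b = Qpm beta k `&` [set p | 0 <= (-1) ^+ b * radial p].
Proof.
apply/seteqP; split => p [Qp r_pos]; split => //=; first exact: ltW.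
by rewrite lt_neqAle r_pos andbT eq_sym signed_radial_neq0.
Qed.

Definition sphere_coef u := 1 + beta * sqprod u.

(* On the ray through a unit vector [u],
   [fpm (sqrt t *: u) = sphere_coef u * t^2 - t + k/4];
   [radius2 false u] and [radius2 true u] are its two roots, larger first. *)
Definition radius2 b u :=
  (1 + (-1) ^+ b * Num.sqrt (1 - k * sphere_coef u)) / (2 * sphere_coef u).

Definition lift b u := Num.sqrt (radius2 b u) *: u.
Definition normalize p := (Num.sqrt (sqnorm p))^-1 *: p.

Lemma sphere_coef_ge1 u : 1 <= sphere_coef u.
Proof. by rewrite /sphere_coef lerDl mulr_ge0 ?sqprod_ge0 ?ltW. Qed.

Lemma sphere_discr u : sphere2 u -> 0 < 1 - k * sphere_coef u < 1.
Proof.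
move=> su; have := sqprod_le u; rewrite [sqnorm u]su expr1n => S3.
have := sphere_coef_ge1 u; have := sqprod_ge0 u; rewrite /sphere_coef => *.
apply/andP; split; nra_hyps.
Qed.

Lemma sphere_sqrt_discr u : sphere2 u -> 0 < Num.sqrt (1 - k * sphere_coef u) < 1.
Proof.
move=> /sphere_discr /andP[d0 d1]; rewrite sqrtr_gt0 d0 /=.
by rewrite -[X in _ < X]sqrtr1 ltr_sqrt.
Qed.

Lemma radius2_gt0 b u : sphere2 u -> 0 < radius2 b u.
Proof.
move=> /sphere_sqrt_discr /andP[D0 D1]; have := sphere_coef_ge1 u.
by rewrite /radius2; case: b => /= a1; apply: divr_gt0; lra.
Qed.

Lemma sqnorm_lift b u : sphere2 u -> sqnorm (lift b u) = radius2 b u.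
Proof.
move=> su; rewrite sqnormZ sqr_sqrtr ?ltW ?radius2_gt0 //.
by rewrite [sqnorm u]su mulr1.
Qed.

Lemma quartic_lift b u : sphere2 u ->
  quartic (lift b u) = sphere_coef u * radius2 b u ^+ 2.
Proof.
move=> su; rewrite /quartic sqnorm_lift // sqprodZ (_ : 4 = 2 * 2)%N // exprM.
by rewrite sqr_sqrtr ?ltW ?radius2_gt0 // /sphere_coef; ring.
Qed.

Lemma radius2E b u : sphere2 u ->
  2 * sphere_coef u * radius2 b u = 1 + (-1) ^+ b * Num.sqrt (1 - k * sphere_coef u).
Proof.
move=> su; have := sphere_coef_ge1 u => a1.
by rewrite /radius2; field; lra.
Qed.

Lemma lift_branch b u : sphere2 u -> branch b (lift b u).
Proof.
move=> su; have a_gt0 : 0 < sphere_coef u by apply: lt_le_trans (sphere_coef_ge1 u).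
have t_gt0 := radius2_gt0 b su; have D_gt0 := (andP (sphere_sqrt_discr su)).1.
have D2 := sqr_sqrtr (ltW (andP (sphere_discr su)).1).
have tE := radius2E b su; have s2 := sqrr_sign R b.
rewrite /branch /Qpm /= fpm_quartic /radial quartic_lift // sqnorm_lift //.
set D := Num.sqrt _ in D_gt0 D2 tE *; set t := radius2 b u in t_gt0 tE *.
set a := sphere_coef u in a_gt0 tE *; set s := (-1) ^+ b in tE s2 *.
have sD : s * (2 * a * t - 1) = D by rewrite tE addrAC subrr add0r mulrA -expr2 s2 mul1r.
split; last first.
  have -> : s * (2 * (a * t ^+ 2) - t) = t * (s * (2 * a * t - 1)) by ring.
  by rewrite sD mulr_gt0.
apply: (@mulfI _ (4 * a)); first by rewrite mulf_neq0 // gt_eqF.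
rewrite mulr0 -/a in D2 *.
have -> : 4 * a * (a * t ^+ 2 - t + k / 4) = (2 * a * t) ^+ 2 - 2 * (2 * a * t) + k * a.
  by field.
by rewrite tE sqrrD exprMn s2 D2; ring.
Qed.

Lemma normalize_lift b u : sphere2 u -> normalize (lift b u) = u.
Proof.
move=> su; rewrite /normalize sqnorm_lift // /lift scalerA mulVf ?scale1r //.
by rewrite gt_eqF // sqrtr_gt0 radius2_gt0.
Qed.

Lemma sqnorm_normalize p : 0 < sqnorm p -> sqnorm (normalize p) = 1.
Proof. by move=> N0; rewrite sqnormZ exprVn sqr_sqrtr ?mulVf ?gt_eqF // ltW. Qed.

Lemma quartic_normalize p : 0 < sqnorm p ->
  sphere_coef (normalize p) * sqnorm p ^+ 2 = quartic p.
Proof.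
move=> N0; rewrite /sphere_coef /quartic sqprodZ (_ : 4 = 2 * 2)%N // exprM.
by rewrite exprVn sqr_sqrtr ?ltW //; field; rewrite gt_eqF.
Qed.

(* With [a := sphere_coef (normalize p)] and [N := sqnorm p], the equation
   [a N^2 - N + k/4 = 0] says [(2 a N - 1)^2 = 1 - k a], and the sign of
   [2 a N - 1 = radial p / N] is fixed on a branch. *)
Lemma radius2_normalize b p : branch b p -> radius2 b (normalize p) = sqnorm p.
Proof.
move=> [Qp r_pos]; have [N0 _ _] := Qpm_facts Qp.
have := Qp; rewrite /Qpm /= fpm_quartic -quartic_normalize // => E.
move: r_pos; rewrite /radial -quartic_normalize // /radius2.
have a_gt0 : 0 < sphere_coef (normalize p) by apply: lt_le_trans (sphere_coef_ge1 _).
set a := sphere_coef _ in E a_gt0 *; set N := sqnorm p in N0 E *.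
have s2 := sqrr_sign R b; set s := (-1) ^+ b in s2 *.
move=> r_pos; have sX_ge0 : 0 <= s * (2 * a * N - 1).
  rewrite (_ : _ * _ = s * (2 * (a * N ^+ 2) - N) / N); last by field; rewrite gt_eqF.
  exact/ltW/divr_gt0.
have -> : Num.sqrt (1 - k * a) = s * (2 * a * N - 1).
  rewrite -[1 - _](_ : (s * (2 * a * N - 1)) ^+ 2 = _) ?sqrtr_sqr ?ger0_norm //.
  by rewrite exprMn s2 mul1r; nra.
by rewrite mulrA -expr2 s2 mul1r; field; rewrite !gt_eqF.
Qed.

Lemma lift_normalize b p : branch b p -> lift b (normalize p) = p.
Proof.
move=> Bp; have [N0 _ _] := Qpm_facts Bp.1.
rewrite /lift radius2_normalize // /normalize scalerA mulfV ?scale1r //.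
by rewrite gt_eqF // sqrtr_gt0.
Qed.

Lemma sphere_coef_continuous : continuous sphere_coef.
Proof. by move=> u; rewrite /sphere_coef /sqprod; poly_continuity. Qed.

Lemma lift_continuous b : continuous (lift b).
Proof.
move=> u; rewrite /lift /radius2; apply: (@continuousZ _ _ 'rV[R]_3); last exact: cvg_id.
apply: cont_sqrt; apply: cont_mul.
  apply: (@cont_add R 'rV[R]_3); first exact: cont_cst.
  apply: cont_mul; first exact: cont_cst.
  apply: cont_sqrt; apply: (@cont_add R 'rV[R]_3); first exact: cont_cst.
  by apply: cont_opp; apply: cont_mul; [exact: cont_cst | exact: sphere_coef_continuous].
apply: cont_inv.
  by rewrite mulf_neq0 // gt_eqF // (lt_le_trans ltr01 (sphere_coef_ge1 u)).
by apply: cont_mul; [exact: cont_cst | exact: sphere_coef_continuous].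
Qed.

Lemma normalize_continuous p : 0 < sqnorm p -> {for p, continuous normalize}.
Proof.
move=> N0; rewrite /normalize; apply: (@continuousZ _ _ 'rV[R]_3); last exact: cvg_id.
apply: cont_inv; first by rewrite gt_eqF // sqrtr_gt0.
by apply: cont_sqrt; exact: sqnorm_continuous.
Qed.

Lemma signed_radial_continuous b : continuous (fun p => (-1) ^+ b * radial p).
Proof. by move=> p; rewrite /radial /quartic /sqnorm /sqprod; poly_continuity. Qed.

Lemma branch_homeomorphic b : homeomorphic (branch b) (@sphere2 R).
Proof.
exists normalize, (lift b); split; [|split; [|split; [|split; [|split]]]].
- move=> p Bp; have [N0 _ _] := Qpm_facts Bp.1.
  exact: sqnorm_normalize.
- by move=> u su; exact: lift_branch.
- by move=> p; rewrite inE; exact: lift_normalize.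
- by move=> u; rewrite inE; exact: normalize_lift.
- apply: continuous_in_subspaceT => p; rewrite inE => -[Qp _].
  by apply: normalize_continuous; case: (Qpm_facts Qp).
- exact/continuous_subspaceT/lift_continuous.
Qed.

Lemma branch_connected b : connected (branch b).
Proof.
have -> : branch b = lift b @` @sphere2 R.
  apply/seteqP; split => [p Bp|_ [u su <-]]; last exact: lift_branch.
  exists (normalize p); last exact: lift_normalize.
  by have [N0 _ _] := Qpm_facts Bp.1; exact: sqnorm_normalize.
apply: connected_continuous_connected; first exact: sphere2_connected.
exact/continuous_subspaceT/lift_continuous.
Qed.

Lemma Qpm_closed : closed (Qpm beta k).
Proof.
rewrite (_ : Qpm beta k = fpm beta k @^-1` [set 0]) //.
by apply: closed_comp => [p _|]; [exact: fpm_continuous | exact: closed_eq].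
Qed.

Lemma branch_closed b : closed (branch b).
Proof.
rewrite branchE; apply: closedI; first exact: Qpm_closed.
rewrite (_ : [set p | _] = (fun p => (-1) ^+ b * radial p) @^-1` [set x | 0 <= x]) //.
by apply: closed_comp => [p _|]; [exact: signed_radial_continuous | exact: closed_ge].
Qed.

Lemma branch_compact b : compact (branch b).
Proof.
have cube : compact [set v : 'rV[R]_3 | forall i, `[-1, 1]%classic (v ord0 i)].
  exact: (@rV_compact R 3 (fun _ => `[-1, 1]%classic) (fun=> @segment_compact R (-1) 1)).
apply: (subclosed_compact (@branch_closed b) cube) => p [Qp _] i /=.
have [_ N1 _] := Qpm_facts Qp; rewrite in_itv /= -ler_norml -(expr_le1 (n := 2)) //.
by rewrite real_normK ?num_real // (le_trans (coord_sqr_le_sqnorm p i)).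
Qed.

Lemma branch_Oh_invariant b : Oh_invariant (branch b).
Proof.
move=> M hM p [Qp r_pos].
rewrite /branch /Qpm /= !fpm_quartic /radial /quartic in Qp r_pos *.
by rewrite sqnorm_signed_perm ?sqprod_signed_perm.
Qed.

(* A connected subset of the zero set meets the open set [{0 < sign * radial}]
   and the closed set [{0 <= sign * radial}] in the same points, since [radial]
   does not vanish on the zero set. *)
Lemma branch_component b p : branch b p -> branch b = connected_component (Qpm beta k) p.
Proof.
move=> Bp; apply/seteqP; split.
  apply: connected_component_max => //; [by move=> q [] | exact: branch_connected].
move=> q [B [Bp' BQ Bconn] Bq].
set pos := (fun x => (-1) ^+ b * radial x) @^-1` [set x | 0 < x].
suff BE : B `&` pos = B.
  have [_ q_pos] : (B `&` pos) q by rewrite BE.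
  by split => //; exact: BQ.
apply: Bconn; first by exists p; split => //; case: Bp.
  exists pos => //; apply: open_comp => [x _|].
    exact: signed_radial_continuous.
  exact: open_gt.
exists ((fun x => (-1) ^+ b * radial x) @^-1` [set x | 0 <= x]).
  by apply: closed_comp => [x _|]; [exact: signed_radial_continuous | exact: closed_ge].
apply/seteqP; split => x [Bx r_pos]; split => //; first exact: ltW.
rewrite /pos /preimage /= lt_neqAle r_pos andbT eq_sym.
by apply: signed_radial_neq0; exact: BQ.
Qed.

End ZeroSet.

Theorem lemma3 (R : realType) (beta k : R) :
  0 < beta -> 0 < k -> k < 3 / (3 + beta) ->
  exists C1 C2 : set 'rV[R]_3,
    Qpm beta k = C1 `|` C2 /\ C1 `&` C2 = set0 /\
    (exists p, C1 p /\ C1 = connected_component (Qpm beta k) p) /\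
    (exists p, C2 p /\ C2 = connected_component (Qpm beta k) p) /\
    (* 0 is a regular value of f_{+-} on Q^{+-}(k): smooth embedded surfaces *)
    (forall p, Qpm beta k p -> exists v : 'rV[R]_3, 'D_v (fpm beta k) p != 0) /\
    (forall C, C = C1 \/ C = C2 ->
       compact C /\ connected C /\ Oh_invariant C /\ homeomorphic C (@sphere2 R)).
Proof.
move=> beta_gt0 k_gt0; rewrite ltr_pdivlMr ?addr_gt0 // => k_small.
have on_branch b : branch beta k b (lift beta k b (@e1 R)).
  exact: (lift_branch beta_gt0 k_gt0 k_small b (@e1_sphere R)).
have component b := branch_component beta_gt0 k_gt0 k_small (on_branch b).
exists (branch beta k false), (branch beta k true); split.
  exact: (Qpm_branches beta_gt0 k_gt0 k_small).
split; first exact: branches_disjoint.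
split; first by exists (lift beta k false (@e1 R)); split; [exact: on_branch | exact: component].
split; first by exists (lift beta k true (@e1 R)); split; [exact: on_branch | exact: component].
split=> [p Qp|C CE].
  exists p; rewrite derive_fpm_radial mulf_neq0 ?pnatr_eq0 //.
  by have [] := Qpm_facts beta_gt0 k_gt0 k_small Qp.
have [b ->] : exists b, C = branch beta k b by case: CE => ->; [exists false | exists true].
split; first exact: (branch_compact beta_gt0 k_gt0 k_small).
split; first exact: (branch_connected beta_gt0 k_gt0 k_small).
split; first exact: branch_Oh_invariant.
exact: (branch_homeomorphic beta_gt0 k_gt0 k_small).
Qed.
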